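(* The relative simplicial complex $X=(Q^*,A^* )$ is not partitionable.
   Context: $Q^*$ is the $3$-dimensional simplicial complex on vertex set $\{0,1,\dots,13\}$ whose faces are all subsets of the following $20$ facets: $\{2,5,6,12\}$, $\{1,5,8,11\}$, $\{0,1,2,5\}$, $\{1,4,8,9\}$, $\{1,2,3,10\}$, $\{4,5,8,13\}$, $\{0,1,2,3\}$, $\{1,4,9,10\}$, $\{1,2,9,10\}$, $\{1,2,5,6\}$, $\{0,2,5,12\}$, $\{4,5,7,13\}$, $\{1,4,5,8\}$, $\{1,2,6,9\}$, $\{1,3,4,7\}$, $\{1,3,4,10\}$, $\{1,5,6,11\}$, $\{1,4,5,7\}$, $\{1,6,9,11\}$, $\{1,8,9,11\}$. $A^*$ is the induced subcomplex of $Q^*$ on vertex set $\{0,2,3,4,6,7,8,10,12,13\}$; its facets are $\{0,2,3\}$, $\{4,7,13\}$, $\{3,4,10\}$, $\{0,2,12\}$, $\{3,4,7\}$, $\{2,3,10\}$, $\{2,6,12\}$, $\{4,8,13\}$. A relative simplicial complex $(\Delta,\Gamma)$ is a pair of simplicial complexes with $\Gamma\subseteq\Delta$; its faces are the elements of $\Delta\setminus\Gamma$, and its facets are the inclusion-maximal faces of $\Delta\setminus\Gamma$. A pure relative complex with facets $F_1,\dots,F_n$ is partitionable if its set of faces is a disjoint union of Boolean intervals $[R_i,F_i]=\{G : R_i\subseteq G\subseteq F_i\}$, $i=1,\dots,n$ (each interval consisting of faces of the relative complex). *)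

From mathcomp Require Import all_boot.
Set Implicit Arguments. Unset Strict Implicit. Unset Printing Implicit Defensive.

Notation V := 'I_14.

Definition vset (s : seq nat) : {set V} := [set x : V | val x \in s].

Definition facetsQ : seq {set V} := map vset
  [:: [:: 2;5;6;12]; [:: 1;5;8;11]; [:: 0;1;2;5]; [:: 1;4;8;9]; [:: 1;2;3;10];
      [:: 4;5;8;13]; [:: 0;1;2;3]; [:: 1;4;9;10]; [:: 1;2;9;10]; [:: 1;2;5;6];
      [:: 0;2;5;12]; [:: 4;5;7;13]; [:: 1;4;5;8]; [:: 1;2;6;9]; [:: 1;3;4;7];
      [:: 1;3;4;10]; [:: 1;5;6;11]; [:: 1;4;5;7]; [:: 1;6;9;11]; [:: 1;8;9;11]].

Definition Qstar : {set {set V}} :=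
  [set G : {set V} | has (fun F : {set V} => G \subset F) facetsQ].

Definition Avert : {set V} := vset [:: 0;2;3;4;6;7;8;10;12;13].
Definition Astar : {set {set V}} := [set G in Qstar | G \subset Avert].

Definition rel_faces (T : finType) (Delta Gamma : {set {set T}}) : {set {set T}} :=
  Delta :\: Gamma.

Definition facets_of (T : finType) (faces : {set {set T}}) : {set {set T}} :=
  [set G in faces | [forall H in faces, (G \subset H) ==> (H == G)]].

Definition interval (T : finType) (R F : {set T}) : {set {set T}} :=
  [set G : {set T} | (R \subset G) && (G \subset F)].

Definition partitionable (T : finType) (faces : {set {set T}}) : Prop :=
  exists R : {set T} -> {set T},
    [/\ (forall F, F \in facets_of faces ->
            R F \subset F /\ interval (R F) F \subset faces),
        (forall F1 F2, F1 \in facets_of faces -> F2 \in facets_of faces ->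
            F1 != F2 -> [disjoint interval (R F1) F1 & interval (R F2) F2])
      & faces = \bigcup_(F in facets_of faces) interval (R F) F].

From mathcomp Require Import all_boot.

Set Implicit Arguments. Unset Strict Implicit. Unset Printing Implicit Defensive.

(* A partitioning of X chooses for every facet F a face R(F) of F.  Making
   these choices one facet at a time, two constraints can be checked as soon as
   F is treated: its interval must miss the intervals chosen before, and every
   face of F contained in no later facet must by now be covered.  Faces are
   coded by lists of vertex labels, so that the resulting backtracking search
   runs in the kernel; for the facets of X it finds no complete choice. *)

Section Intervals.
Variable T : finType.
Implicit Types R F G H : {set T}.

Lemma disjoint_interval R1 F1 R2 F2 : R1 \subset F1 -> R2 \subset F2 ->
  [disjoint interval R1 F1 & interval R2 F2] = ~~ ((R1 \subset F2) && (R2 \subset F1)).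
Proof.
move=> sRF1 sRF2; apply/idP/idP => [D | /negP N].
- apply/negP=> /andP[sR1F2 sR2F1].
  have G12 : R1 :|: R2 \in interval R1 F1 by rewrite inE subsetUl subUset sRF1.
  by move: (disjointFr D G12); rewrite inE subsetUr subUset sR1F2 sRF2.
- rewrite -setI_eq0; apply/eqP/setP => G; rewrite !inE.
  apply/negP => /and3P[/andP[sR1G sGF1] sR2G sGF2].
  by apply: N; rewrite (subset_trans sR1G sGF2) (subset_trans sR2G sGF1).
Qed.

Lemma facets_of_generated (Fs : seq {set T}) (Gamma : {set {set T}}) :
  {in Fs &, forall F1 F2, F1 \subset F2 -> F1 = F2} -> {in Fs, forall F, F \notin Gamma} ->
  facets_of ([set G : {set T} | has (fun F => G \subset F) Fs] :\: Gamma) =i Fs.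
Proof.
move=> antichain FsGamma; set faces := _ :\: _.
have Fs_faces F : F \in Fs -> F \in faces.
  by move=> FFs; rewrite in_setD FsGamma // inE; apply/hasP; exists F.
have face_sub G : G \in faces -> exists2 F, F \in Fs & G \subset F.
  by rewrite in_setD inE => /andP[_ /hasP].
move=> F; rewrite inE; apply/andP/idP => [[/face_sub[F' F'Fs sFF'] /forall_inP max]|FFs].
  by rewrite -(eqP (implyP (max F' (Fs_faces _ F'Fs)) sFF')).
split; first exact: Fs_faces.
apply/forall_inP => H /face_sub[F' F'Fs sHF']; apply/implyP => sFH.
have EF : F = F' by apply: antichain => //; exact: subset_trans sFH sHF'.
by rewrite eqEsubset sFH EF sHF'.
Qed.

End Intervals.

Section Search.
Variable S : eqType.
Implicit Types s t g r : seq S.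

Definition lsubset s t := all (mem t) s.

Fixpoint subseqs s : seq (seq S) :=
  if s is x :: s' then [seq x :: u | u <- subseqs s'] ++ subseqs s' else [:: [::]].

Lemma filter_subseqs (p : pred S) s : filter p s \in subseqs s.
Proof.
elim: s => [|x s IHs] /=; first by rewrite mem_seq1.
by case: (p x); rewrite mem_cat ?IHs ?orbT // map_f.
Qed.

Lemma subseqs_subset r s : r \in subseqs s -> {subset r <= s}.
Proof.
elim: s r => [|x s IHs] r /=; first by rewrite mem_seq1 => /eqP ->.
rewrite mem_cat => /orP[/mapP[u /IHs sus ->] y|/IHs sus y ry].
  by rewrite !in_cons => /orP[->|/sus ->]; rewrite ?orbT.
by rewrite in_cons sus ?orbT.
Qed.

Variable isface : pred (seq S).

Definition covers (p : seq S * seq S) g := lsubset p.1 g && lsubset g p.2.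

Definition admissible (chosen : seq (seq S * seq S)) F (pending : seq (seq S)) r :=
  [&& isface r,
      all (fun p => ~~ (lsubset r p.2 && lsubset p.1 F)) chosen &
      all (fun g => has (fun p => covers p g) ((r, F) :: chosen)) pending].

(* [pending] lists the faces of [F] lying in no later facet: they must be
   covered as soon as the interval of [F] is chosen.  The recursive call sits
   under an [if] rather than an [&&] so that it stays lazy under [vm_compute]. *)
Fixpoint partition_search (chosen : seq (seq S * seq S)) (Fs : seq (seq S)) : bool :=
  if Fs is F :: Fs' then
    let pending := [seq g <- subseqs F | ~~ has (lsubset g) Fs' & isface g] in
    has (fun r => if admissible chosen F pending r
                  then partition_search ((r, F) :: chosen) Fs' else false)
        (subseqs F)
  else true.

End Search.

Section Codes.
Variables (T : finType) (S : eqType) (f : T -> S).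
Hypothesis f_inj : injective f.
Implicit Types s t : seq S.

Definition set_of_code s : {set T} := [set x | f x \in s].

Lemma subset_codeE s t :
  {subset s <= codom f} -> (set_of_code s \subset set_of_code t) = lsubset s t.
Proof.
move=> s_f; apply/subsetP/allP => [sub y ys | sub x]; last by rewrite !inE => /sub.
by have /codomP[x Ey] := s_f y ys; move: (sub x) ys; rewrite !inE Ey; apply.
Qed.

Lemma set_of_code_filter (G : {set T}) s :
  G \subset set_of_code s -> set_of_code [seq y <- s | y \in map f (enum G)] = G.
Proof.
move=> /subsetP sGs; apply/setP => x; rewrite !inE mem_filter mem_map // mem_enum.
by apply/andP/idP => [[] | xG] //; split=> //; have := sGs x xG; rewrite inE.
Qed.

End Codes.

Section Completeness.
Variables (T : finType) (S : eqType) (f : T -> S).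
Variables (faces : {set {set T}}) (isface : pred (seq S)).
Hypothesis f_inj : injective f.
Hypothesis isfaceE :
  forall g, {subset g <= codom f} -> isface g = (set_of_code f g \in faces).

Local Notation code := (set_of_code f).

Section Partition.
Variable R : {set T} -> {set T}.
Hypothesis R_facet : forall F, F \in facets_of faces ->
  R F \subset F /\ interval (R F) F \subset faces.
Hypothesis R_disjoint : forall F1 F2,
  F1 \in facets_of faces -> F2 \in facets_of faces -> F1 != F2 ->
  [disjoint interval (R F1) F1 & interval (R F2) F2].
Hypothesis R_cover : faces = \bigcup_(F in facets_of faces) interval (R F) F.

Definition R_code (F : seq S) := [seq y <- F | y \in map f (enum (R (code F)))].

Definition search_invariant (chosen : seq (seq S * seq S)) (Fs : seq (seq S)) :=
  [/\ {in Fs ++ unzip2 chosen, forall F, {subset F <= codom f}},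
      forall p, p \in chosen -> {subset p.1 <= p.2} /\ code p.1 = R (code p.2),
      uniq (map code (Fs ++ unzip2 chosen))
    & facets_of faces =i map code (Fs ++ unzip2 chosen)].

Section Step.
Variables (chosen : seq (seq S * seq S)) (F : seq S) (Fs : seq (seq S)).
Hypothesis inv : search_invariant chosen (F :: Fs).

Lemma head_facet : code F \in facets_of faces.
Proof. by case: inv => _ _ _ ->; rewrite map_f ?mem_head. Qed.

Lemma head_range : {subset F <= codom f}.
Proof. by case: inv => range _ _ _; apply: range; rewrite mem_head. Qed.

Lemma chosen_facet p : p \in chosen -> code p.2 \in facets_of faces.
Proof. by case: inv => _ _ _ -> pc; rewrite map_f // mem_cat (map_f snd pc) orbT. Qed.

Lemma chosen_range p : p \in chosen ->
  {subset p.1 <= codom f} /\ {subset p.2 <= codom f}.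
Proof.
case: inv => range chosen_R _ _ pc.
have range_p2 : {subset p.2 <= codom f}.
  by apply: range; rewrite mem_cat (map_f snd pc) orbT.
by split=> // y /(chosen_R p pc).1 /range_p2.
Qed.

Lemma R_code_sub : {subset R_code F <= F}.
Proof. by move=> y; rewrite mem_filter => /andP[]. Qed.

Lemma R_code_range : {subset R_code F <= codom f}.
Proof. by move=> y /R_code_sub /head_range. Qed.

Lemma code_R_code : code (R_code F) = R (code F).
Proof. exact/set_of_code_filter/(R_facet head_facet).1. Qed.

Lemma R_code_face : isface (R_code F).
Proof.
have [sRF RF_faces] := R_facet head_facet.
rewrite isfaceE; last exact: R_code_range.
by rewrite code_R_code (subsetP RF_faces) // inE subxx sRF.
Qed.

Lemma R_code_disjoint :
  all (fun p => ~~ (lsubset (R_code F) p.2 && lsubset p.1 F)) chosen.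
Proof.
apply/allP => p pc; case: inv => _ chosen_R uniq_Fs _.
have [_ code_p1] := chosen_R p pc.
have [range_p1 range_p2] := chosen_range pc.
have [range_F range_R] := (head_range, R_code_range).
have neq : code F != code p.2.
  apply: contraTneq uniq_Fs => EF.
  by rewrite /= EF map_cat mem_cat (map_f code (map_f snd pc)) orbT.
have := R_disjoint head_facet (chosen_facet pc) neq.
rewrite disjoint_interval ?(R_facet (chosen_facet pc)).1 ?(R_facet head_facet).1 //.
by rewrite -code_R_code -code_p1 !subset_codeE.
Qed.

Lemma R_code_covers g : g \in subseqs F -> ~~ has (lsubset g) Fs -> isface g ->
  has (fun p => covers p g) ((R_code F, F) :: chosen).
Proof.
move=> gF not_later; have [range_F range_R] := (head_range, R_code_range).
have range_g : {subset g <= codom f} by move=> y /(subseqs_subset gF) /range_F.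
rewrite isfaceE // R_cover => /bigcupP[F0]; case: inv => _ chosen_R _ ->.
case/mapP=> q q_in ->; rewrite inE => /andP[sRg sgq].
move: q_in; rewrite mem_cat => /orP[/predU1P[Eq | q_later] | /mapP[p pc Ep]].
- by subst q; rewrite /= /covers -!(subset_codeE (f:=f)) // code_R_code sRg sgq.
- by case/negP: not_later; apply/hasP; exists q; rewrite // -(subset_codeE (f:=f)).
- subst q; have [range_p1 range_p2] := chosen_range pc.
  apply/orP; right; apply/hasP; exists p => //.
  by rewrite /covers -!(subset_codeE (f:=f)) // (chosen_R p pc).2 sRg sgq.
Qed.

Lemma search_invariant_cons : search_invariant ((R_code F, F) :: chosen) Fs.
Proof.
have perm_Fs : perm_eq (Fs ++ F :: unzip2 chosen) (F :: Fs ++ unzip2 chosen).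
  by rewrite -cat1s perm_catCA.
case: inv => range chosen_R uniq_Fs facets_Fs; split => /=.
- by move=> F0; rewrite (perm_mem perm_Fs); apply: range.
- move=> p; rewrite in_cons => /predU1P[-> | /chosen_R //].
  by split; [apply: R_code_sub | apply: code_R_code].
- by rewrite (perm_uniq (perm_map code perm_Fs)).
- by move=> G; rewrite facets_Fs (perm_mem (perm_map code perm_Fs)).
Qed.

End Step.

Lemma partition_search_complete (Fs : seq (seq S)) (chosen : seq (seq S * seq S)) :
  search_invariant chosen Fs -> partition_search isface chosen Fs.
Proof.
elim: Fs chosen => [//|F Fs IH] chosen inv /=.
apply/hasP; exists (R_code F); first exact: filter_subseqs.
rewrite ifT; first exact/IH/search_invariant_cons.
rewrite /admissible (R_code_face inv) (R_code_disjoint inv); apply/allP => g.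
by rewrite mem_filter => /andP[/andP[]] *; apply: (R_code_covers inv).
Qed.

End Partition.

Lemma partitionable_search (Fs : seq (seq S)) :
  {in Fs, forall F, {subset F <= codom f}} ->
  uniq (map code Fs) -> facets_of faces =i map code Fs ->
  partitionable faces -> partition_search isface [::] Fs.
Proof.
move=> range_Fs uniq_Fs facets_Fs [R [R_facet R_disjoint R_cover]].
by apply: (partition_search_complete R_facet R_disjoint R_cover); split; rewrite ?cats0.
Qed.

End Completeness.

(* Any order of the facets of Q^* is correct; this one, found by a local search,
   keeps the search tree at about 1750 nodes. *)
Definition search_order : seq (seq nat) :=
  [:: [:: 1;4;9;10]; [:: 1;2;9;10]; [:: 1;2;6;9]; [:: 1;4;8;9]; [:: 1;6;9;11];
      [:: 1;8;9;11]; [:: 1;5;8;11]; [:: 1;5;6;11]; [:: 1;4;5;8]; [:: 1;2;5;6];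
      [:: 1;4;5;7]; [:: 0;1;2;5]; [:: 2;5;6;12]; [:: 0;2;5;12]; [:: 1;3;4;7];
      [:: 1;3;4;10]; [:: 4;5;8;13]; [:: 4;5;7;13]; [:: 0;1;2;3]; [:: 1;2;3;10]].

Definition A_vertices : seq nat := [:: 0;2;3;4;6;7;8;10;12;13].

Definition X_face (g : seq nat) := has (lsubset g) search_order && ~~ lsubset g A_vertices.

Lemma X_not_partition_search : partition_search X_face [::] search_order = false.
Proof. by vm_compute. Qed.

Lemma search_order_range :
  {in search_order, forall F, {subset F <= codom (@nat_of_ord 14)}}.
Proof.
have small : all (all (fun y => y < 14)) search_order by [].
move=> F /(allP small) /allP F_small y /F_small y14.
by apply/codomP; exists (Ordinal y14).
Qed.

Lemma search_order_antichain :
  {in search_order &, forall s t, lsubset s t -> s = t}.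
Proof.
have incomparable :
  all (fun s => all (fun t => lsubset s t ==> (s == t)) search_order) search_order by [].
by move=> s t /(allP incomparable) /allP /[apply] /implyP /[apply] /eqP.
Qed.

Lemma subset_vsetE s t : s \in search_order -> (vset s \subset vset t) = lsubset s t.
Proof. by move=> /search_order_range; apply: subset_codeE. Qed.

Lemma search_order_not_A : {in search_order, forall s, ~~ lsubset s A_vertices}.
Proof. exact/allP. Qed.

Lemma facetsQ_perm : perm_eq facetsQ (map vset search_order).
Proof. by apply: perm_map. Qed.

Lemma uniq_facets : uniq (map vset search_order).
Proof.
rewrite map_inj_in_uniq // => s t sQ tQ Est.
by apply: search_order_antichain; rewrite // -subset_vsetE // Est.
Qed.

Lemma facets_X : facets_of (rel_faces Qstar Astar) =i map vset search_order.
Proof.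
move=> G; rewrite (facets_of_generated _ _) ?(perm_mem facetsQ_perm) //.
- move=> _ _ /[!(perm_mem facetsQ_perm)] /mapP[s sQ ->] /mapP[t tQ ->].
  by rewrite subset_vsetE // => /search_order_antichain ->.
- move=> _ /[!(perm_mem facetsQ_perm)] /mapP[s sQ ->].
  by rewrite inE /Avert subset_vsetE // (negbTE (search_order_not_A sQ)) andbF.
Qed.

Lemma X_faceE g : {subset g <= codom (@nat_of_ord 14)} ->
  X_face g = (set_of_code (@nat_of_ord 14) g \in rel_faces Qstar Astar).
Proof.
move=> g_range; rewrite /rel_faces in_setD /Astar /Qstar !inE.
rewrite (perm_has _ facetsQ_perm) has_map.
rewrite (@eq_has _ _ (lsubset g)) => [|s /=]; last by rewrite subset_codeE.
by rewrite /Avert subset_codeE // /X_face -/A_vertices; case: has; case: lsubset.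
Qed.

Theorem theorem3p6 : ~ partitionable (rel_faces Qstar Astar).
Proof.
move=> /(partitionable_search (@ord_inj 14) X_faceE search_order_range uniq_facets facets_X).
by rewrite X_not_partition_search.
Qed.
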